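(* Let $W$ be the Witt algebra with basis $\{x_n\mid n\in\mathbb{Z}\}$ and bracket $[x_m,x_n]=(n-m)x_{m+n}$. For $\beta\in\mathbb{C}$ and $k\in\mathbb{Z}$ with $\beta-k\neq0$, the product $$x_mx_n=(n+k)x_{m+n}\ \text{ if } m+n+k\neq0,\qquad x_{-n-k}x_n=\frac{(n+k)(\beta-n-k)}{\beta-k}x_{-k},$$ defines a left-symmetric algebra $V^{\beta,k}$ on the underlying space of $W$ whose commutator $x_mx_n-x_nx_m$ is the bracket of $W$.
   Context: A left-symmetric algebra is a vector space with bilinear product satisfying $(xy)z-x(yz)=(yx)z-y(xz)$ for all $x,y,z$. *)

From HB Require Import structures.
From mathcomp Require Import all_boot all_order all_algebra.
Set Implicit Arguments. Unset Strict Implicit. Unset Printing Implicit Defensive.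
Import Order.TTheory GRing.Theory Num.Theory.
Local Open Scope ring_scope.

Definition spans (C : fieldType) (V : lmodType C) (e : int -> V) : Prop :=
  forall v : V, exists (s : seq int) (a : int -> C),
    v = \sum_(i <- s) a i *: e i.

Definition lin_indep (C : fieldType) (V : lmodType C) (e : int -> V) : Prop :=
  forall (s : seq int) (a : int -> C), uniq s ->
    \sum_(i <- s) a i *: e i = 0 -> forall i, i \in s -> a i = 0.

Definition is_basis (C : fieldType) (V : lmodType C) (e : int -> V) : Prop :=
  spans e /\ lin_indep e.

Definition bilinear_op (C : fieldType) (V : lmodType C) (p : V -> V -> V) : Prop :=
  (forall (a : C) (x y z : V), p (a *: x + y) z = a *: p x z + p y z) /\
  (forall (a : C) (x y z : V), p z (a *: x + y) = a *: p z x + p z y).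

Definition left_symmetric (C : fieldType) (V : lmodType C) (p : V -> V -> V) : Prop :=
  forall x y z : V, p (p x y) z - p x (p y z) = p (p y x) z - p y (p x z).

Definition witt_bracket_on (C : fieldType) (V : lmodType C) (e : int -> V)
    (br : V -> V -> V) : Prop :=
  forall m n : int, br (e m) (e n) = (n - m)%:~R *: e (m + n).

Definition lsa_coef (C : fieldType) (beta : C) (k m n : int) : C :=
  if m + n + k != 0 then (n + k)%:~R
  else ((n + k)%:~R * (beta - (n + k)%:~R)) / (beta - k%:~R).

Definition lsa_product_on (C : fieldType) (V : lmodType C) (e : int -> V)
    (beta : C) (k : int) (p : V -> V -> V) : Prop :=
  forall m n : int, p (e m) (e n) = lsa_coef beta k m n *: e (m + n).

(* Write the structure constants as c(m,n) = n + k + g(m,n), where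
   g(m,n) = mn/(beta-k) if m+n+k = 0 and g(m,n) = 0 otherwise.  As g is
   symmetric, c(m,n) - c(n,m) = n - m.  The constants n + k alone satisfy the
   left-symmetry identity, and the corrections cancel because g(a,b) vanishes
   unless a+b+k = 0: this kills g(a,b)(a+b+k), forces m = 0 whenever
   g(n,l) g(m,n+l) could be nonzero, and relates the three corrections living on
   m+n+l+k = 0.  Both identities pass from basis vectors to all of V by
   multilinearity, and a product with the prescribed constants exists because a
   bilinear map can be prescribed freely on a basis. *)

From HB Require Import structures.
From mathcomp Require Import all_boot all_order all_algebra zify ring.
Import Order.TTheory GRing.Theory Num.Theory.
Set Implicit Arguments.
Unset Strict Implicit.
Unset Printing Implicit Defensive.
Local Open Scope ring_scope.

Section BasisExtension.
Variables (C : fieldType) (V : lmodType C) (e : int -> V).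
Implicit Types (W : lmodType C) (r : seq (int * C)).

Definition combination W (f : int -> W) r : W := \sum_(x <- r) x.2 *: f x.1.

Lemma combination_cat W (f : int -> W) r1 r2 :
  combination f (r1 ++ r2) = combination f r1 + combination f r2.
Proof. exact: big_cat. Qed.

Lemma combinationZ W (f : int -> W) (a : C) r :
  combination f [seq (x.1, a * x.2) | x <- r] = a *: combination f r.
Proof.
rewrite /combination big_map scaler_sumr.
by apply: eq_bigr => x _; rewrite scalerA.
Qed.

Lemma combination_undup W (f : int -> W) r :
  combination f r =
  \sum_(i <- undup (map fst r)) (\sum_(x <- r | x.1 == i) x.2) *: f i.
Proof.
transitivity (\sum_(x <- r) \sum_(i <- undup (map fst r))
                  (if i == x.1 then x.2 *: f x.1 else 0)).
  apply: eq_big_seq => x xr.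
  rewrite (bigD1_seq x.1) ?eqxx /= ?undup_uniq ?mem_undup ?map_f //.
  by rewrite big1 ?addr0 // => i /negPf ->.
rewrite exchange_big; apply: eq_bigr => i _.
rewrite scaler_suml [RHS]big_mkcond; apply: eq_bigr => x _.
by rewrite eq_sym; case: eqP => // ->.
Qed.

Lemma combination_transfer W (f : int -> W) r :
  lin_indep e -> combination e r = 0 -> combination f r = 0.
Proof.
move=> e_free; rewrite !combination_undup => /e_free r_rel.
apply: big1_seq => i /andP[_ ir].
by rewrite (r_rel (undup_uniq _) i ir) scale0r.
Qed.

Lemma linear_combination W (f : V -> W) r :
  linear f -> f (combination e r) = combination (fun i => f (e i)) r.
Proof.
move=> f_lin; elim: r => [|x r IHr].
  by rewrite /combination !big_nil -(subrr 0) (zmod_morphism_linear f_lin) subrr.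
by rewrite /combination !big_cons f_lin -/(combination e r) IHr.
Qed.

Hypothesis e_spans : spans e.

Lemma spans_combination v : exists r, v == combination e r.
Proof.
have [s [a ->]] := e_spans v.
by exists [seq (i, a i) | i <- s]; rewrite /combination big_map.
Qed.

Lemma linear_spans_eq0 W (f : V -> W) :
  linear f -> (forall i, f (e i) = 0) -> forall v, f v = 0.
Proof.
move=> f_lin f_e0 v; have [r /eqP ->] := spans_combination v.
by rewrite linear_combination // /combination big1 // => x _; rewrite f_e0 scaler0.
Qed.

Lemma bilinear_spans_eq0 W (F : V -> V -> W) :
  (forall y, linear (F^~ y)) -> (forall x, linear (F x)) ->
  (forall i j, F (e i) (e j) = 0) -> forall x y, F x y = 0.
Proof.
move=> F_linl F_linr F_e0 x y.
apply: (linear_spans_eq0 (F_linl y)) => i.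
exact: (linear_spans_eq0 (F_linr (e i))).
Qed.

Lemma trilinear_spans_eq0 W (F : V -> V -> V -> W) :
  (forall y z, linear (fun x => F x y z)) ->
  (forall x z, linear (fun y => F x y z)) ->
  (forall x y, linear (F x y)) ->
  (forall i j l, F (e i) (e j) (e l) = 0) -> forall x y z, F x y z = 0.
Proof.
move=> F_lin1 F_lin2 F_lin3 F_e0 x y z.
apply: (linear_spans_eq0 (F_lin1 y z)) => i.
exact: (bilinear_spans_eq0 (F_lin2 (e i)) (F_lin3 (e i))).
Qed.

(* A vector's coordinates are chosen among its representations; the choice
   is harmless because [e] is free, see [extend_combination]. *)
Definition coords v : seq (int * C) := xchoose (spans_combination v).

Definition extend W (f : int -> W) v : W := combination f (coords v).

Lemma coordsP v : combination e (coords v) = v.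
Proof. by apply/esym/eqP; exact: (xchooseP (spans_combination v)). Qed.

Hypothesis e_free : lin_indep e.

Lemma extend_combination W (f : int -> W) r :
  extend f (combination e r) = combination f r.
Proof.
set r0 := coords (combination e r).
have r0P : combination e r0 = combination e r := coordsP _.
have := combination_transfer f (r := r0 ++ [seq (x.1, -1 * x.2) | x <- r]) e_free.
rewrite !combination_cat !combinationZ !scaleN1r r0P subrr => /(_ erefl) /eqP.
by rewrite subr_eq0 => /eqP.
Qed.

Lemma extend_basis W (f : int -> W) i : extend f (e i) = f i.
Proof.
have -> : e i = combination e [:: (i, 1)] by rewrite /combination big_seq1 scale1r.
by rewrite extend_combination /combination big_seq1 scale1r.
Qed.

Lemma linear_extend W (f : int -> W) : linear (extend f).
Proof.
move=> a u v; rewrite -{1}(coordsP u) -{1}(coordsP v) -combinationZ.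
by rewrite -combination_cat extend_combination combination_cat combinationZ.
Qed.

Lemma extend_family_linear W (F G H : int -> W) (a : C) v :
  (forall i, F i = a *: G i + H i) -> extend F v = a *: extend G v + extend H v.
Proof.
move=> FE; rewrite /extend /combination scaler_sumr -big_split /=.
by apply: eq_bigr => x _; rewrite FE scalerDr !scalerA mulrC.
Qed.

Definition bilinear_extend (f : int -> int -> V) (x y : V) : V :=
  extend (fun i => extend (f i) y) x.

Lemma bilinear_extend_basis f i j : bilinear_extend f (e i) (e j) = f i j.
Proof. by rewrite /bilinear_extend !extend_basis. Qed.

Lemma bilinear_op_extend f : bilinear_op (bilinear_extend f).
Proof.
split=> a x y z; first exact: linear_extend.
by apply: extend_family_linear => i; rewrite linear_extend.
Qed.

End BasisExtension.

Section Linearity.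
Variables (C : fieldType) (V : lmodType C) (p : V -> V -> V).
Hypothesis p_bilin : bilinear_op p.

Lemma linear_idfun : linear (fun x : V => x).
Proof. by []. Qed.

Lemma linear_subf (W : lmodType C) (f g : V -> W) :
  linear f -> linear g -> linear (fun x => f x - g x).
Proof. by move=> f_lin g_lin a u v; rewrite f_lin g_lin scalerBr opprD addrACA. Qed.

Lemma linear_opl (f : V -> V) z : linear f -> linear (fun x => p (f x) z).
Proof. by move=> f_lin a u v; rewrite f_lin p_bilin.1. Qed.

Lemma linear_opr (f : V -> V) z : linear f -> linear (fun x => p z (f x)).
Proof. by move=> f_lin a u v; rewrite f_lin p_bilin.2. Qed.

Lemma bilinear_opZl a x z : p (a *: x) z = a *: p x z.
Proof. exact: (scalable_linear (linear_opl z linear_idfun)). Qed.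

Lemma bilinear_opZr a x z : p z (a *: x) = a *: p z x.
Proof. exact: (scalable_linear (linear_opr z linear_idfun)). Qed.

End Linearity.

Ltac linearity :=
  repeat first
    [ apply: linear_subf
    | apply: linear_idfun
    | match goal with
      | p_bilin : bilinear_op _ |- _ =>
          first [ apply: (linear_opl p_bilin) | apply: (linear_opr p_bilin) ]
      end ].

Section StructureConstants.
Variables (C : fieldType) (beta : C) (k : int).
Hypothesis beta_k_neq0 : beta - k%:~R != 0.

Definition lsa_corr (m n : int) : C :=
  if m + n + k == 0 then (m * n)%:~R / (beta - k%:~R) else 0.

Lemma lsa_coefE m n : lsa_coef beta k m n = (n + k)%:~R + lsa_corr m n.
Proof.
rewrite /lsa_coef /lsa_corr; case: eqP => [hmnk|_] /=; last by rewrite addr0.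
have hb := beta_k_neq0; have hk : k = - m - n by lia.
by rewrite hk !(intrD, intrN, intrM) in hb *; field.
Qed.

Lemma lsa_corrC m n : lsa_corr m n = lsa_corr n m.
Proof. by rewrite /lsa_corr [n + m]addrC [n * m]mulrC. Qed.

Lemma lsa_corrM_index m n : lsa_corr m n * (m + n + k)%:~R = 0.
Proof. by rewrite /lsa_corr; case: eqP => [->|_]; rewrite ?mulr0 ?mul0r. Qed.

Lemma lsa_corrM_nested m n l : lsa_corr n l * lsa_corr m (n + l) = 0.
Proof.
rewrite /lsa_corr; case: eqP => [hnl|_]; last by rewrite mul0r.
case: eqP => [hmnl|_]; last by rewrite mulr0.
have -> : m = 0 by lia.
by rewrite !mul0r mulr0.
Qed.

Lemma lsa_corr_shift m n l :
  (n - m)%:~R * lsa_corr (m + n) l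
  = (l + k)%:~R * (lsa_corr m (n + l) - lsa_corr n (m + l)).
Proof.
rewrite /lsa_corr addrA [n + (m + l)]addrA [n + m]addrC.
case: eqP => [hmnl|_]; last by rewrite subrr !mulr0.
have -> : l + k = - (m + n) by lia.
by rewrite !(intrD, intrN, intrM); field.
Qed.

Lemma lsa_coef_commutator m n :
  lsa_coef beta k m n - lsa_coef beta k n m = (n - m)%:~R.
Proof. by rewrite !lsa_coefE lsa_corrC !(intrD, intrN); ring. Qed.

Lemma lsa_coef_left_symmetric m n l :
  lsa_coef beta k m n * lsa_coef beta k (m + n) l
  - lsa_coef beta k n l * lsa_coef beta k m (n + l)
  = lsa_coef beta k n m * lsa_coef beta k (n + m) l
  - lsa_coef beta k m l * lsa_coef beta k n (m + l).
Proof.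
have h_u := lsa_corrM_index n l; have h_w := lsa_corrM_index m l.
have h_uv := lsa_corrM_nested m n l; have h_wz := lsa_corrM_nested n m l.
have h_shift := lsa_corr_shift m n l.
rewrite [n + m]addrC !lsa_coefE [lsa_corr n m]lsa_corrC.
move: h_u h_w h_shift; rewrite !(intrD, intrN).
set y := lsa_corr (m + n) l; set u := lsa_corr n l; set v := lsa_corr m (n + l).
set w := lsa_corr m l; set z := lsa_corr n (m + l).
set M : C := m%:~R; set N : C := n%:~R; set L : C := l%:~R; set K : C := k%:~R.
move=> h_u h_w h_shift; apply/eqP; rewrite -subr_eq0; apply/eqP.
(* the difference of the two sides is this combination of the relations *)
transitivity ((N - M) * y - (L + K) * (v - z)
              - u * (N + L + K) - u * v + w * (M + L + K) + w * z); first by ring.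
by rewrite h_shift h_u h_uv h_w h_wz subrr !subr0 !addr0.
Qed.
End StructureConstants.

Section LeftSymmetricProduct.
Variables (C : fieldType) (V : lmodType C) (e : int -> V) (beta : C) (k : int).
Variable p : V -> V -> V.
Hypotheses (e_spans : spans e) (beta_k_neq0 : beta - k%:~R != 0).
Hypotheses (p_bilin : bilinear_op p) (p_basis : lsa_product_on e beta k p).

Lemma lsa_product_left_symmetric : left_symmetric p.
Proof.
move=> x y z; apply/eqP; rewrite -subr_eq0; apply/eqP; move: x y z.
apply: (trilinear_spans_eq0 e_spans) => [y z|x z|x y|i j l]; try by linearity.
rewrite !p_basis !(bilinear_opZl p_bilin) !(bilinear_opZr p_bilin) !p_basis.
rewrite !scalerA !addrA -!scalerBl lsa_coef_left_symmetric //.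
by rewrite (addrC j i) subrr.
Qed.

Lemma lsa_product_commutator (br : V -> V -> V) :
  bilinear_op br -> witt_bracket_on e br -> forall x y, p x y - p y x = br x y.
Proof.
move=> br_bilin br_basis x y; apply/eqP; rewrite -subr_eq0; apply/eqP; move: x y.
apply: (bilinear_spans_eq0 e_spans) => [y|x|i j]; try by linearity.
by rewrite !p_basis br_basis (addrC j i) -scalerBl lsa_coef_commutator // subrr.
Qed.

End LeftSymmetricProduct.

Unset Implicit Arguments.

Theorem theorem3p8 (C : numClosedFieldType) (V : lmodType C) (e : int -> V)
    (br : V -> V -> V) (beta : C) (k : int) :
  is_basis e -> bilinear_op br -> witt_bracket_on e br ->
  beta - k%:~R != 0 ->
  (exists p : V -> V -> V, bilinear_op p /\ lsa_product_on e beta k p) /\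
  (forall p : V -> V -> V, bilinear_op p -> lsa_product_on e beta k p ->
     left_symmetric p /\ (forall x y : V, p x y - p y x = br x y)).
Proof.
move=> [e_spans e_free] br_bilin br_basis beta_k_neq0; split.
  exists (bilinear_extend e_spans (fun m n => lsa_coef beta k m n *: e (m + n))).
  split; first exact: bilinear_op_extend.
  by move=> m n; rewrite bilinear_extend_basis.
move=> p p_bilin p_basis; split.
  exact: (lsa_product_left_symmetric e_spans beta_k_neq0 p_bilin p_basis).
exact: (lsa_product_commutator e_spans beta_k_neq0 p_bilin p_basis br_bilin br_basis).
Qed.
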